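(* For all integers $n\ge1$, $\Delta_1(n)=0$. For all integers $\ell>1$: $\Delta_\ell(1)<0$ and $\Delta_\ell(2)>0$. Moreover $\Delta_\ell(3)<0$ for $2\le\ell\le 13$ and $\Delta_\ell(3)>0$ for $\ell\ge 14$.
   Context: For integers $n\geq 0$ let $S_n$ be the symmetric group on $n$ elements ($S_0$ trivial). For an integer $\ell\geq 1$ let $C_{\ell,n}=\{(\pi_1,\dots,\pi_\ell)\in S_n^\ell : \pi_j\pi_k=\pi_k\pi_j \text{ for all } 1\le j,k\le \ell\}$ and $N_\ell(n)=|C_{\ell,n}|/|S_n|$ (so $N_\ell(0)=1$). Define $\Delta_\ell(n)=N_\ell(n)^2-N_\ell(n-1)N_\ell(n+1)$ for $n\geq 1$. *)

From HB Require Import structures.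
From mathcomp Require Import all_boot all_order all_algebra all_fingroup.
Set Implicit Arguments. Unset Strict Implicit. Unset Printing Implicit Defensive.
Import Order.TTheory GRing.Theory Num.Theory.

Definition commuting_tuples (l n : nat) : {set {ffun 'I_l -> 'S_n}} :=
  [set t : {ffun 'I_l -> 'S_n} | [forall j : 'I_l, forall k : 'I_l,
      (t j * t k == t k * t j)%g]].

Definition Ncomm (l n : nat) : rat :=
  (#|commuting_tuples l n|%:R / #|[set: 'S_n]|%:R)%R.

(* Delta_l(n) = N_l(n)^2 - N_l(n-1) N_l(n+1) (used for n >= 1). *)
Definition Delta (l n : nat) : rat :=
  (Ncomm l n ^+ 2 - Ncomm l n.-1 * Ncomm l n.+1)%R.

From mathcomp Require Import all_boot all_order all_algebra all_fingroup.
From mathcomp Require Import zify ring.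
Set Implicit Arguments. Unset Strict Implicit. Unset Printing Implicit Defensive.
Import Order.TTheory GRing.Theory Num.Theory.

(* Splitting a commuting (l+1)-tuple of elements of H into its first entry x and
   the rest gives |C_{l+1}(H)| = sum_(x in H) |C_l(C_H(x))|, and an abelian H has
   |H|^l commuting l-tuples.  In S_3 and S_4 the centraliser of every non-identity
   element is a CA-group (its non-central elements have abelian centralisers), so
   two rounds of this recursion give closed forms: |C_{l,n}| = (n!)^l for n <= 2,
   3 2^l + 3^l - 3 for n = 3 and 7 4^l + 4 3^l - 6 2^l - 4 for n = 4.  The
   centraliser data of S_3 and S_4 is checked by computing with permutations
   encoded as lists.  The signs of the Delta_l(n) then come down to comparing
   sums of exponentials; for Delta_l(3) this is 4 9^l + 12 6^l + 54 4^l + 36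
   against 21 8^l + 60 2^l + 24 3^l, where the larger side changes between
   l = 13 and l = 14. *)

Section CommutingTuples.
Variable gT : finGroupType.
Implicit Types (H : {set gT}) (x : gT).
Local Open Scope group_scope.

Definition commuting_tuples_in l H : {set {ffun 'I_l -> gT}} :=
  [set t in ffun_on H | [forall j, forall k, t j * t k == t k * t j]].

Lemma card_commuting_tuples_in0 H : #|commuting_tuples_in 0 H| = 1%N.
Proof.
suff -> : commuting_tuples_in 0 H = setT by rewrite cardsT card_ffun card_ord.
by apply/setP => t; rewrite !inE; apply/andP; split; apply/forallP; case.
Qed.

Lemma card_commuting_tuples_in_abelian l H :
  abelian H -> #|commuting_tuples_in l H| = (#|H| ^ l)%N.
Proof.
move=> /centsP cHH; rewrite -[l in RHS]card_ord -card_ffun_on; apply: eq_card => t.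
rewrite inE andb_idr // => /ffun_onP Ht.
by apply/forallP => j; apply/forallP => k; apply/eqP/(cHH _ (Ht j))/Ht.
Qed.

Definition fcons l x (u : {ffun 'I_l -> gT}) : {ffun 'I_l.+1 -> gT} :=
  [ffun i => if unlift ord0 i is Some j then u j else x].

Lemma fcons0 l x u : @fcons l x u ord0 = x.
Proof. by rewrite ffunE unlift_none. Qed.

Lemma fconsS l x u j : @fcons l x u (lift ord0 j) = u j.
Proof. by rewrite ffunE liftK. Qed.

Lemma fcons_inj l x : injective (@fcons l x).
Proof. by move=> u v eq_uv; apply/ffunP => j; rewrite -(fconsS x u) eq_uv fconsS. Qed.

Lemma fcons_commuting l H x u :
  (fcons x u \in commuting_tuples_in l.+1 H) =
  (x \in H) && (u \in commuting_tuples_in l 'C_H[x]).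
Proof.
rewrite !inE; apply/andP/andP.
  case=> /ffun_onP Hxu /forallP cxu; have := Hxu ord0; rewrite fcons0 => Hx.
  split=> //; apply/andP; split.
    apply/ffun_onP => j; rewrite in_setI -(fconsS x u) Hxu cent1E.
    by move/forallP: (cxu (lift ord0 j)) => /(_ ord0); rewrite fcons0.
  apply/forallP => j; apply/forallP => k; rewrite -!(fconsS x u).
  by move/forallP: (cxu (lift ord0 j)); apply.
case=> Hx /andP[/ffun_onP Hu /forallP cu].
have {}Hu j : u j \in H /\ u j * x = x * u j.
  by move: (Hu j); rewrite in_setI cent1E => /andP[-> /eqP].
split.
  apply/ffun_onP => i; case: (unliftP ord0 i) => [j ->|->]; rewrite ?fconsS ?fcons0 //.
  by case: (Hu j).
apply/forallP => i; apply/forallP => k.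
case: (unliftP ord0 i) => [j ->|->]; case: (unliftP ord0 k) => [j' ->|->];
  rewrite ?fconsS ?fcons0 //; first exact: (forallP (cu j)).
- by case: (Hu j) => _ ->.
- by case: (Hu j') => _ ->.
Qed.

Lemma fcons_eta l (t : {ffun 'I_l.+1 -> gT}) :
  t = fcons (t ord0) [ffun j => t (lift ord0 j)].
Proof.
by apply/ffunP => i; case: (unliftP ord0 i) => [j ->|->]; rewrite ?fconsS ?fcons0 ?ffunE.
Qed.

Lemma card_commuting_tuples_inS l H :
  #|commuting_tuples_in l.+1 H| =
    (\sum_(x in H) #|commuting_tuples_in l 'C_H[x]|)%N.
Proof.
rewrite -sum1_card.
rewrite (partition_big (fun t : {ffun _ -> gT} => t ord0) (mem H)) /=; last first.
  by move=> t; rewrite inE => /andP[/ffun_onP Ht _]; apply: Ht.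
apply: eq_bigr => x Hx; rewrite -(card_imset _ (@fcons_inj l x)) -sum1_card.
apply: eq_bigl => t; apply/andP/imsetP => [[Ct /eqP t0] | [u Cu ->]].
  move: Ct; rewrite (fcons_eta t) t0 fcons_commuting => /andP[_ Cu].
  by exists [ffun j => t (lift ord0 j)]; rewrite // -t0 -fcons_eta.
by rewrite fcons0 fcons_commuting Hx.
Qed.
End CommutingTuples.

Definition pmul (s t : seq nat) : seq nat := map (nth 0 t) s.
Definition pcommute (s t : seq nat) : bool := pmul s t == pmul t s.

Definition cent_codes (M : seq (seq nat)) s := filter (pcommute s) M.
Definition central_code (M : seq (seq nat)) s := all (pcommute s) M.
Definition abelian_codes (M : seq (seq nat)) := all (central_code M) M.

Section PermCodes.
Variable n : nat.
Implicit Types (p q : 'S_n) (s : seq nat) (M : seq (seq nat)).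
Local Open Scope group_scope.

Definition perm_code p : seq nat := [seq val (p i) | i <- enum 'I_n].
Definition perm_codes : seq (seq nat) := permutations (iota 0 n).
Definition perm_set M : {set 'S_n} := [set p | perm_code p \in M].

Lemma size_perm_code p : size (perm_code p) = n.
Proof. by rewrite size_map size_enum_ord. Qed.

Lemma nth_perm_code p (i : 'I_n) : nth 0 (perm_code p) i = val (p i).
Proof. by rewrite (nth_map i) ?size_enum_ord // nth_ord_enum. Qed.

Lemma perm_code_inj : injective perm_code.
Proof.
by move=> p q eq_pq; apply/permP => i; apply: val_inj; rewrite -!nth_perm_code eq_pq.
Qed.

Lemma perm_codeM p q : perm_code (p * q) = pmul (perm_code p) (perm_code q).
Proof.
rewrite /pmul -map_comp; apply: eq_map => i /=.
by rewrite (nth_perm_code q (p i)) permM.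
Qed.

Lemma pcommute_perm_code p q : pcommute (perm_code p) (perm_code q) = (p * q == q * p).
Proof. by rewrite /pcommute -!perm_codeM (inj_eq perm_code_inj). Qed.

Lemma perm_code_mem p : perm_code p \in perm_codes.
Proof.
have uniq_p : uniq (perm_code p).
  by rewrite map_inj_uniq ?enum_uniq // => i j /val_inj /perm_inj.
have sub_p : {subset perm_code p <= iota 0 n}.
  by move=> _ /mapP[i _ ->]; rewrite mem_iota /= ltn_ord.
rewrite mem_permutations uniq_perm ?iota_uniq //.
by apply: (uniq_min_size uniq_p sub_p _).2; rewrite size_iota size_perm_code.
Qed.

Lemma perm_codesP s : reflect (exists p, s = perm_code p) (s \in perm_codes).
Proof.
apply: (iffP idP) => [s_code | [p ->]]; last exact: perm_code_mem.
have uniq_codes : uniq (map perm_code (enum 'S_n)).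
  by rewrite map_inj_uniq ?enum_uniq //; apply: perm_code_inj.
have sub_codes : {subset map perm_code (enum 'S_n) <= perm_codes}.
  by move=> _ /mapP[p _ ->]; apply: perm_code_mem.
have [|_ eq_codes] := uniq_min_size uniq_codes sub_codes.
  by rewrite size_map -cardE card_Sn size_permutations ?iota_uniq // size_iota.
by move: s_code; rewrite -eq_codes => /mapP[p _ ->]; exists p.
Qed.

Lemma perm_set_cent1 M p :
  'C_(perm_set M)[p] = perm_set (cent_codes M (perm_code p)).
Proof.
by apply/setP => q; rewrite in_setI cent1E !inE mem_filter pcommute_perm_code andbC eq_sym.
Qed.

Lemma abelian_perm_set M : abelian_codes M -> abelian (perm_set M).
Proof.
move=> /allP cMM; apply/centsP => p; rewrite inE => Mp q; rewrite inE => Mq.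
by apply/eqP; rewrite -pcommute_perm_code; apply: (allP (cMM _ Mp)).
Qed.

Lemma big_perm_set M (F : seq nat -> nat) : subseq M perm_codes ->
  (\sum_(p in perm_set M) F (perm_code p) = \sum_(s <- M) F s)%N.
Proof.
move=> subM; rewrite -big_enum -(big_map perm_code xpredT); apply: perm_big.
rewrite uniq_perm ?(subseq_uniq subM) ?permutations_uniq //.
  by rewrite map_inj_uniq ?enum_uniq //; apply: perm_code_inj.
move=> s; apply/mapP/idP => [[p] | Ms]; first by rewrite mem_enum inE => ? ->.
have /perm_codesP[p def_s] := mem_subseq subM Ms.
by exists p; rewrite // mem_enum inE -def_s.
Qed.

Lemma card_perm_set M : subseq M perm_codes -> #|perm_set M| = size M.
Proof. by move=> subM; rewrite -sum1_card (big_perm_set (fun=> 1%N)) // sum1_size. Qed.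

Lemma perm_set_codes : perm_set perm_codes = [set: 'S_n].
Proof. by apply/setP => p; rewrite !inE perm_code_mem. Qed.

End PermCodes.

Definition CA_codes (M : seq (seq nat)) : bool :=
  all (fun s => central_code M s || abelian_codes (cent_codes M s)) M.

(* For counting commuting tuples, a CA-group is determined by its number of central
   elements and the orders of the (abelian) centralisers of the other elements. *)
Definition CA_profile (M : seq (seq nat)) : nat * seq nat :=
  (count (central_code M) M, [seq size (cent_codes M s) | s <- M & ~~ central_code M s]).

Definition cent_profiles (M : seq (seq nat)) : seq (nat * seq nat) :=
  [seq CA_profile (cent_codes M s) | s <- M & ~~ central_code M s].

Fixpoint CA_tuple_count (P : nat * seq nat) (l : nat) : nat :=
  if l is l'.+1 then P.1 * CA_tuple_count P l' + \sum_(k <- P.2) k ^ l' else 1.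

Lemma CA_tuple_countS z ks l :
  CA_tuple_count (z, ks) l.+1 = z * CA_tuple_count (z, ks) l + \sum_(k <- ks) k ^ l.
Proof. by []. Qed.

Lemma CA_tuple_count_abelian k l : CA_tuple_count (k, [::]) l = k ^ l.
Proof. by elim: l => //= l ->; rewrite big_nil addn0 expnS. Qed.

(* The closed form (d z^l + m ((z + d)^l - z^l)) / d, without subtraction or division. *)
Lemma CA_tuple_count_nseq z d m l :
  d * CA_tuple_count (z, nseq m (z + d)) l + m * z ^ l = d * z ^ l + m * (z + d) ^ l.
Proof.
elim: l => [|l IH] /=; first by rewrite addnC.
by rewrite big_nseq iter_addn_0 !expnS; nia.
Qed.

Section CommutingPermTuples.
Variable n : nat.
Implicit Types M : seq (seq nat).

Local Notation ctuples l M := #|commuting_tuples_in l (perm_set n M)|.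

Lemma cent_codes_subseq M s :
  subseq M (perm_codes n) -> subseq (cent_codes M s) (perm_codes n).
Proof. exact: subseq_trans (filter_subseq _ _). Qed.

Lemma card_commuting_perm_setS l M : subseq M (perm_codes n) ->
  ctuples l.+1 M =
    count (central_code M) M * ctuples l M +
    \sum_(s <- M | ~~ central_code M s) ctuples l (cent_codes M s).
Proof.
move=> subM; rewrite card_commuting_tuples_inS.
under eq_bigr do rewrite perm_set_cent1.
rewrite (big_perm_set (fun s => ctuples l (cent_codes M s))) // (bigID (central_code M)) /=.
congr (_ + _); rewrite big_seq_cond (eq_bigr (fun=> ctuples l M)).
  by rewrite -big_seq_cond big_const_seq iter_addn_0 mulnC.
by move=> s /andP[_ /all_filterP eqM]; rewrite /cent_codes eqM.
Qed.

Lemma card_commuting_perm_set_CA l M : subseq M (perm_codes n) -> CA_codes M ->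
  ctuples l M = CA_tuple_count (CA_profile M) l.
Proof.
move=> subM /allP CA_M; elim: l => [|l IH]; first exact: card_commuting_tuples_in0.
rewrite card_commuting_perm_setS // IH /CA_profile CA_tuple_countS big_map big_filter.
apply/eqP; rewrite eqn_add2l big_seq_cond [X in _ == X]big_seq_cond; apply/eqP.
apply: eq_bigr => s /andP[Ms not_central].
have := CA_M s Ms; rewrite (negbTE not_central) /= => /abelian_perm_set abelian_Ms.
by rewrite card_commuting_tuples_in_abelian // card_perm_set // cent_codes_subseq.
Qed.

Lemma card_commuting_perm_set_cent_CA l M : subseq M (perm_codes n) ->
  all (fun s => central_code M s || CA_codes (cent_codes M s)) M ->
  ctuples l.+1 M =
    count (central_code M) M * ctuples l M + \sum_(P <- cent_profiles M) CA_tuple_count P l.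
Proof.
move=> subM /allP CA_cent; rewrite card_commuting_perm_setS // big_map big_filter.
apply/eqP; rewrite eqn_add2l big_seq_cond [X in _ == X]big_seq_cond; apply/eqP.
apply: eq_bigr => s /andP[Ms not_central].
apply: card_commuting_perm_set_CA; first exact: cent_codes_subseq.
by move: (CA_cent s Ms); rewrite (negbTE not_central).
Qed.

End CommutingPermTuples.

Definition cent_profile_spec (M : seq (seq nat)) (z : nat) (Ps : seq (nat * seq nat)) :=
  [&& count (central_code M) M == z,
      all (fun s => central_code M s || CA_codes (cent_codes M s)) M &
      perm_eq (cent_profiles M) Ps].

Lemma commuting_tuples_perm_codes l n :
  commuting_tuples l n = commuting_tuples_in l (perm_set n (perm_codes n)).
Proof.
rewrite perm_set_codes; apply/setP => t; rewrite !inE.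
by rewrite andb_idl // => _; apply/forallP => i; rewrite inE.
Qed.

Lemma card_commuting_tuplesS l n z Ps : cent_profile_spec (perm_codes n) z Ps ->
  #|commuting_tuples l.+1 n| =
    z * #|commuting_tuples l n| + \sum_(P <- Ps) CA_tuple_count P l.
Proof.
case/and3P=> /eqP <- CA_cent eq_Ps.
rewrite !commuting_tuples_perm_codes card_commuting_perm_set_cent_CA //.
by rewrite (perm_big _ eq_Ps).
Qed.

Lemma card_commuting_tuples_small l n : n <= 2 -> #|commuting_tuples l n| = n`! ^ l.
Proof.
move=> le_n2; rewrite commuting_tuples_perm_codes card_commuting_tuples_in_abelian.
  by rewrite perm_set_codes cardsT card_Sn.
by apply: abelian_perm_set; case: n le_n2 => [|[|[|]]] // _; vm_compute.
Qed.

Lemma card_commuting_tuples_S3 l : #|commuting_tuples l 3| + 3 = 3 * 2 ^ l + 3 ^ l.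
Proof.
have rec k : #|commuting_tuples k.+1 3| = #|commuting_tuples k 3| + 3 * 2 ^ k + 2 * 3 ^ k.
  (* transpositions have centralisers of order 2, 3-cycles of order 3 *)
  rewrite (@card_commuting_tuplesS _ _ 1 (nseq 3 (2, [::]) ++ nseq 2 (3, [::])));
    last by vm_compute.
  by rewrite big_cat !big_nseq /= !CA_tuple_count_abelian; lia.
elim: l => [|l IH]; first by rewrite commuting_tuples_perm_codes card_commuting_tuples_in0.
by rewrite rec !expnS; lia.
Qed.

Lemma card_commuting_tuples_S4 l :
  #|commuting_tuples l 4| + 6 * 2 ^ l + 4 = 7 * 4 ^ l + 4 * 3 ^ l.
Proof.
have rec k : #|commuting_tuples k.+1 4| + 6 * 2 ^ k =
             #|commuting_tuples k 4| + 21 * 4 ^ k + 8 * 3 ^ k.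
  (* transpositions and 4-cycles have abelian centralisers of order 4, 3-cycles
     of order 3; a double transposition has a dihedral centraliser of order 8,
     with centre of order 2 and six elements with centralisers of order 4 *)
  rewrite (@card_commuting_tuplesS _ _ 1
    (nseq 12 (4, [::]) ++ nseq 8 (3, [::]) ++ nseq 3 (2, nseq 6 4))); last by vm_compute.
  have : 2 * CA_tuple_count (2, nseq 6 4) k + 6 * 2 ^ k = 2 * 2 ^ k + 6 * 4 ^ k.
    exact: CA_tuple_count_nseq 2 2 6 k.
  by rewrite !big_cat !big_nseq /= !CA_tuple_count_abelian; lia.
elim: l => [|l IH]; first by rewrite commuting_tuples_perm_codes card_commuting_tuples_in0.
by have := rec l; rewrite !expnS; lia.
Qed.

Lemma card_commuting_1tuples n : #|commuting_tuples 1 n| = n`!.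
Proof.
rewrite commuting_tuples_perm_codes card_commuting_tuples_inS.
rewrite (eq_bigr (fun=> 1)) => [|p _]; last exact: card_commuting_tuples_in0.
by rewrite sum1_card perm_set_codes cardsT card_Sn.
Qed.

Lemma pow_ineq_Delta2 l : 1 < l -> 6 * 2 ^ l + 2 * 3 ^ l < 3 * 4 ^ l + 6.
Proof.
elim: l => // l IH; rewrite ltnS leq_eqVlt => /predU1P[<- // | l_gt1].
have := IH l_gt1; have : 2 <= 2 ^ l by rewrite -[X in X <= _](expn1 2) leq_exp2l // ltnW.
rewrite !expnS; lia.
Qed.

Lemma pow_ineq_Delta3_small l : 2 <= l <= 13 ->
  4 * 9 ^ l + 12 * 6 ^ l + 54 * 4 ^ l + 36 < 21 * 8 ^ l + 60 * 2 ^ l + 24 * 3 ^ l.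
Proof.
case/andP; do 14 (case: l => [|l]; first lia); lia.
Qed.

Lemma pow_ineq_Delta3_large l : 14 <= l ->
  21 * 8 ^ l + 60 * 2 ^ l + 24 * 3 ^ l < 4 * 9 ^ l + 12 * 6 ^ l + 54 * 4 ^ l + 36.
Proof.
have pow6_le_pow8 k : 1 < k -> 36 * 6 ^ k <= 21 * 8 ^ k.
  elim: k => // k IH; rewrite ltnS leq_eqVlt => /predU1P[<- // | k_gt1].
  by have := IH k_gt1; rewrite !expnS; lia.
move=> l_ge14; suff : 21 * 8 ^ l + 60 * 2 ^ l + 24 * 3 ^ l < 4 * 9 ^ l + 12 * 6 ^ l by lia.
elim: l l_ge14 => // l IH; rewrite ltnS leq_eqVlt => /predU1P[<- | l_gt13]; first lia.
have := IH l_gt13; have := pow6_le_pow8 l (leq_trans _ l_gt13).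
rewrite !expnS; lia.
Qed.

Local Open Scope ring_scope.

Lemma NcommE l n : Ncomm l n = #|commuting_tuples l n|%:R / n`!%:R.
Proof. by rewrite /Ncomm cardsT card_Sn. Qed.

Lemma Ncomm1 n : Ncomm 1 n = 1.
Proof. by rewrite NcommE card_commuting_1tuples divff // pnatr_eq0 -lt0n fact_gt0. Qed.

Lemma Ncomm_le1 l n : (n <= 1)%N -> Ncomm l n = 1.
Proof.
by case: n => [|[|]] // _; rewrite NcommE card_commuting_tuples_small // exp1n divr1.
Qed.

Lemma Ncomm2 l : Ncomm l 2 = (2 ^ l)%:R / 2.
Proof. by rewrite NcommE card_commuting_tuples_small. Qed.

Lemma Ncomm3 l : Ncomm l 3 = (3 * (2 ^ l)%:R + (3 ^ l)%:R - 3) / 6.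
Proof.
have E : #|commuting_tuples l 3|%:R + 3 = 3 * (2 ^ l)%:R + (3 ^ l)%:R :> rat.
  by rewrite -natrM -!natrD card_commuting_tuples_S3.
by rewrite NcommE -E addrK.
Qed.

Lemma Ncomm4 l :
  Ncomm l 4 = (7 * (4 ^ l)%:R + 4 * (3 ^ l)%:R - 6 * (2 ^ l)%:R - 4) / 24.
Proof.
have E : #|commuting_tuples l 4|%:R + 6 * (2 ^ l)%:R + 4 =
         7 * (4 ^ l)%:R + 4 * (3 ^ l)%:R :> rat.
  by rewrite -!natrM -!natrD card_commuting_tuples_S4.
by rewrite NcommE -E; congr (_ / _); ring.
Qed.

Section DeltaClosedForms.
Variable l : nat.

Lemma Delta1E : Delta l 1 * 2 = 2 - (2 ^ l)%:R.
Proof. by rewrite /Delta Ncomm2 !Ncomm_le1 //; field. Qed.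

Lemma Delta2E : Delta l 2 * 12 = 3 * (4 ^ l)%:R + 6 - (6 * (2 ^ l)%:R + 2 * (3 ^ l)%:R).
Proof.
rewrite /Delta Ncomm2 Ncomm3 Ncomm_le1 // -[(4 ^ l)%N]/((2 ^ 2) ^ l)%N expnAC !natrX.
by field.
Qed.

Lemma Delta3E :
  Delta l 3 * 144 = 4 * (9 ^ l)%:R + 12 * (6 ^ l)%:R + 54 * (4 ^ l)%:R + 36
                    - (21 * (8 ^ l)%:R + 60 * (2 ^ l)%:R + 24 * (3 ^ l)%:R).
Proof.
rewrite /Delta Ncomm2 Ncomm3 Ncomm4 (expnMn 2 3) -[(9 ^ l)%N]/((3 ^ 2) ^ l)%N.
rewrite -[(8 ^ l)%N]/((2 ^ 3) ^ l)%N -[(4 ^ l)%N]/((2 ^ 2) ^ l)%N !(expnAC _ _ l).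
rewrite natrM !natrX.
by field.
Qed.

End DeltaClosedForms.

Theorem lemma2p1 :
  (forall n : nat, (1 <= n)%N -> Delta 1 n = 0%R) /\
  (forall l : nat, (1 < l)%N -> (Delta l 1 < 0)%R /\ (0 < Delta l 2)%R) /\
  (forall l : nat, (2 <= l <= 13)%N -> (Delta l 3 < 0)%R) /\
  (forall l : nat, (14 <= l)%N -> (0 < Delta l 3)%R).
Proof.
split; first by move=> n _; rewrite /Delta !Ncomm1 expr1n mulr1 subrr.
split.
  move=> l l_gt1; split.
    rewrite -(pmulr_llt0 _ (_ : 0 < 2)) // Delta1E subr_lt0 ltr_nat.
    by rewrite -[X in (X < _)%N](expn1 2) ltn_exp2l.
  rewrite -(pmulr_lgt0 _ (_ : 0 < 12)) // Delta2E subr_gt0 -!natrM -!natrD ltr_nat.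
  exact: pow_ineq_Delta2.
split=> l l_range.
  rewrite -(pmulr_llt0 _ (_ : 0 < 144)) // Delta3E subr_lt0 -!natrM -!natrD ltr_nat.
  exact: pow_ineq_Delta3_small.
rewrite -(pmulr_lgt0 _ (_ : 0 < 144)) // Delta3E subr_gt0 -!natrM -!natrD ltr_nat.
exact: pow_ineq_Delta3_large.
Qed.
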